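(* Let $p$ be a prime, $q$ a power of $p$, $F$ a field of characteristic $p$ containing $\mathbb{F}_q$, and $L\in F[x]$ a $q$-polynomial of $q$-degree $n$ with no repeated roots in its splitting field $E$ over $F$; let $v_1,\dots,v_n$ be an ordered $\mathbb{F}_q$-basis of the space of roots of $L$. For $r\geq1$ let $\epsilon_r:H_{n,r}(\mathbb{F}_q)\to E$, $\epsilon_r(P)=P(v_1,\dots,v_n)$. If $\epsilon_r$ is not injective, then $\epsilon_t$ is not injective for all $t\geq r$.
   Context: $H_{n,r}(\mathbb{F}_q)$ is the space of homogeneous polynomials of degree $r$ in $\mathbb{F}_q[x_1,\dots,x_n]$ together with $0$. A $q$-polynomial of $q$-degree $n$ is $\sum_{i=0}^n a_ix^{q^i}$ with $a_n\neq0$. *)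

From HB Require Import structures.
From mathcomp Require Import all_boot all_order all_algebra all_field.
From mathcomp Require Import mpoly.
Set Implicit Arguments. Unset Strict Implicit. Unset Printing Implicit Defensive.
Import GRing.Theory.
Local Open Scope ring_scope.

Definition q_poly (F : fieldType) (q n : nat) (a : nat -> F) : {poly F} :=
  \sum_(i < n.+1) a i *: 'X^(q ^ i).

Definition no_repeated_roots (E : fieldType) (P : {poly E}) : Prop :=
  exists2 rs : seq E, uniq rs & P %= \prod_(r <- rs) ('X - r%:P).

Definition eps (Fq E : fieldType) (emb : Fq -> E) (n : nat) (v : 'I_n -> E)
  (P : {mpoly Fq[n]}) : E := (map_mpoly emb P).@[v].

Definition eps_injective (Fq E : fieldType) (emb : Fq -> E) (n : nat)
  (v : 'I_n -> E) (r : nat) : Prop :=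
  forall P Q : {mpoly Fq[n]}, P \is r.-homog -> Q \is r.-homog ->
    eps emb v P = eps emb v Q -> P = Q.

From HB Require Import structures.
From mathcomp Require Import all_boot all_order all_algebra all_field.
From mathcomp Require Import mpoly.
Set Implicit Arguments. Unset Strict Implicit. Unset Printing Implicit Defensive.
Import GRing.Theory.
Local Open Scope ring_scope.

(** Multiplying by the monomial [x_1^(t-r)] sends [H_{n,r}] injectively into
    [H_{n,t}] and commutes with evaluation at [v], so a nonzero kernel element
    of [epsilon_r] yields one of [epsilon_t].  With no variables at all, the
    space [H_{0,r}] is trivial for [r >= 1]. *)

Lemma dhomog_mpoly0 (R : nzRingType) (r : nat) (P : {mpoly R[0]}) :
  (0 < r)%N -> P \is r.-homog -> P = 0.
Proof.
move=> r_gt0 /dhomogP homP; apply/eqP; rewrite -msupp_eq0.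
case: (msupp P) homP => [//|m s /(_ m (mem_head _ _))].
have -> : m = 0%MM by apply/mnmP => -[].
by move=> r0; rewrite -r0 mf0 in r_gt0.
Qed.

Lemma mpolyX_neq0 (R : nzRingType) (n : nat) (m : 'X_{1..n}) :
  'X_[m] != 0 :> {mpoly R[n]}.
Proof.
apply/eqP => /(congr1 (mcoeff m)); rewrite mcoeffX eqxx mcoeff0.
by apply/eqP; rewrite oner_eq0.
Qed.

Section EvaluationMap.

Variables (Fq E : fieldType) (emb : {rmorphism Fq -> E}).

Lemma epsM (n : nat) (v : 'I_n -> E) (P Q : {mpoly Fq[n]}) :
  eps emb v (P * Q) = eps emb v P * eps emb v Q.
Proof. by rewrite /eps rmorphM mevalM. Qed.

Lemma eps_injective_mulr (n : nat) (v : 'I_n -> E) (r s : nat) (M : {mpoly Fq[n]}) :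
  M != 0 -> M \is s.-homog -> eps_injective emb v (r + s) -> eps_injective emb v r.
Proof.
move=> M_neq0 homM injrs P Q homP homQ eqPQ; apply: (mulIf M_neq0).
by apply: injrs; rewrite ?dhomogM ?epsM ?eqPQ.
Qed.

Lemma eps_injective_vars0 (v : 'I_0 -> E) (r : nat) :
  (0 < r)%N -> eps_injective emb v r.
Proof.
by move=> r_gt0 P Q /(dhomog_mpoly0 r_gt0)-> /(dhomog_mpoly0 r_gt0)->.
Qed.

Lemma eps_injective_le (n : nat) (v : 'I_n -> E) (r t : nat) :
  (0 < r)%N -> (r <= t)%N -> eps_injective emb v t -> eps_injective emb v r.
Proof.
case: n v => [|n] v r_gt0 le_rt inj_t; first exact: eps_injective_vars0.
apply: (@eps_injective_mulr _ v r (t - r) 'X_[U_(ord0) *+ (t - r)]).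
- exact: mpolyX_neq0.
- by rewrite dhomogX /= mdegMn mdeg1 mul1n.
- by rewrite subnKC.
Qed.

End EvaluationMap.

Theorem lemma7p1
  (p q k : nat) (Fq : finFieldType) (F : fieldType) (E : fieldExtType F)
  (iota : {rmorphism Fq -> F}) (n : nat) (a : nat -> F) (v : 'I_n -> E) :
  prime p -> (0 < k)%N -> q = (p ^ k)%N ->
  p \in [pchar F] ->
  #|Fq| = q ->
  a n != 0 ->
  (* E is the splitting field of L over F *)
  splittingFieldFor 1%VS (map_poly (in_alg E) (q_poly q n a)) fullv ->
  no_repeated_roots (map_poly (in_alg E) (q_poly q n a)) ->
  (* v_1, ..., v_n is an ordered F_q-basis of the roots of L in E *)
  (forall i, root (map_poly (in_alg E) (q_poly q n a)) (v i)) ->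
  (forall c : 'I_n -> Fq,
     \sum_(i < n) in_alg E (iota (c i)) * v i = 0 -> forall i, c i = 0) ->
  (forall x : E, root (map_poly (in_alg E) (q_poly q n a)) x ->
     exists c : 'I_n -> Fq, x = \sum_(i < n) in_alg E (iota (c i)) * v i) ->
  forall r : nat, (1 <= r)%N ->
  ~ eps_injective (fun c => in_alg E (iota c)) v r ->
  forall t : nat, (r <= t)%N ->
  ~ eps_injective (fun c => in_alg E (iota c)) v t.
Proof.
move=> _ _ _ _ _ _ _ _ _ _ _ r r_gt0 noninj_r t le_rt inj_t; apply: noninj_r.
exact: (eps_injective_le (emb := (in_alg E \o iota)%FUN) r_gt0 le_rt inj_t).
Qed.
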